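(* Consider the Markov decision process with state space $\mathcal X=\{e\}$, action set $\mathcal A_e=\{0,1\}$, transitions $P(e,0,e)=P(e,1,e)=1$, and reward laws $S(e,0,e,\cdot)=\delta_0$, $S(e,1,e,\cdot)=\delta_1$. If $\gamma\in(1/2,1)$, then one can choose the parameters of Algorithm 1 (the deterministic initial function $\hat Q^0$, the initial laws $\nu_k$ and the learning rates $\alpha_k$), with $\varepsilon_k(e)=0$ for all $k\ge0$, such that almost surely, for both $a\in\{0,1\}$, $\sum_{k\ge1}\alpha_k(e,a)\mathbf 1_{\{\tau^{k+1}_{e,a}<\infty\}}=\infty$ and $\sum_{k\ge1}(\alpha_k(e,a))^2\mathbf 1_{\{\tau^{k+1}_{e,a}<\infty\}}<\infty$ (and trivially $\lim_k\varepsilon_k(e)=0$), but $\lim_{k\to\infty}V_{\hat\pi^k}(e)$ almost surely does not exist.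
   Context: General setting: $\mathcal X$ finite state space, finite action sets $\mathcal A_x$, $\mathcal Z=\{(x,a):x\in\mathcal X,a\in\mathcal A_x\}$, transition laws $P(x,a,\cdot)$ on $\mathcal X$, reward laws $S(x,a,y,\cdot)$ on $\mathbb R$ with finite second moment, discount $\gamma\in[0,1)$. For an SM policy $\pi$ (a family of probability measures $\pi(x,\cdot)$ on $\mathcal A_x$) and $x\in\mathcal X$: $X_0=x$, $A_t\sim\pi(X_t,\cdot)$, $X_{t+1}\sim P(X_t,A_t,\cdot)$, and conditionally on the state-action process the rewards $R_{t+1}\sim S(X_t,A_t,X_{t+1},\cdot)$ are independent; $V_\pi(x)=\mathbb E_{x,\pi}[\sum_{t\ge0}\gamma^tR_{t+1}]$. Algorithm 1. Fix a deterministic $\hat Q^0:\mathcal Z\to\mathbb R$. For $k\ge0$, given episodes $i=1,\dots,k$ of the form $(X^i_0,A^i_0,X^i_1,R^i_1,A^i_1,\dots)$, let $\mathcal F^k$ be the $\sigma$-field they generate ($\mathcal F^0$ trivial) and $\mathcal G^i_n=\sigma(X^i_0,A^i_0,X^i_1,R^i_1,A^i_1,\dots,X^i_n,R^i_n,A^i_n)$; suppose $\hat Q^k$ is $\mathcal F^k$-measurable. For some $\mathcal F^k$-measurable $\varepsilon_k:\mathcal X\to[0,1]$ let $\hat\pi^k(x,a)=\frac{\varepsilon_k(x)}{|\mathcal A_x|}+\mathbf 1_{\{a\in\arg\max\hat Q^k(x,\cdot)\}}\frac{1-\varepsilon_k(x)}{|\arg\max\hat Q^k(x,\cdot)|}$.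 For some $\mathcal F^k$-measurable probability $\nu_k$ on $\mathcal Z$, build episode $k+1$ with $(X^{k+1}_0,A^{k+1}_0)\sim\nu_k$ and then policy $\hat\pi^k$. Let $\tau^{k+1}_{x,a}=\inf\{t\ge0:(X^{k+1}_t,A^{k+1}_t)=(x,a)\}$ ($\inf\emptyset=\infty$), $G^{k+1}_{x,a}=\sum_{t\ge0}\gamma^tR^{k+1}_{\tau^{k+1}_{x,a}+t+1}$ (zero if $\tau^{k+1}_{x,a}=\infty$), and for some $\mathcal F^k\vee\mathcal G^{k+1}_{\tau^{k+1}_{x,a}}$-measurable $\alpha_k(x,a)\in[0,1]$ set $\hat Q^{k+1}(x,a)=(1-\alpha_k(x,a)\mathbf 1_{\{\tau^{k+1}_{x,a}<\infty\}})\hat Q^k(x,a)+\alpha_k(x,a)\mathbf 1_{\{\tau^{k+1}_{x,a}<\infty\}}G^{k+1}_{x,a}$. *)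

From mathcomp Require Import all_boot all_order all_algebra.
From mathcomp Require Import all_classical all_reals all_analysis.

Set Implicit Arguments.
Unset Strict Implicit.
Unset Printing Implicit Defensive.

Import Order.TTheory GRing.Theory Num.Theory.
Import numFieldNormedType.Exports.

Local Open Scope classical_set_scope.
Local Open Scope ring_scope.

(* The MDP: one state e, actions A_e = {0,1} encoded by bool (true = 1),
   P(e,a,e) = 1, S(e,0,e,.) = delta_0, S(e,1,e,.) = delta_1.
   Since the state is always e, an episode is determined by its action
   sequence (A_t)_t and its rewards are R_{t+1} = reward A_t. *)

Definition reward {R : realType} (a : bool) : R := if a then 1 else 0.

(* A history: h i t = action A^i_t of episode i (episodes indexed from 1;
   the coordinate i = 0 is unused). *)
Definition history := nat -> nat -> bool.

Section MC.
Variable R : realType.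
Variable gamma : R.

(* tau^i_{e,a}: first time t with (X^i_t, A^i_t) = (e,a); None = infinity *)
Definition tau (h : history) (i : nat) (a : bool) : option nat :=
  match pselect (exists t, h i t == a) with
  | left pf => Some (ex_minn pf)
  | right _ => None
  end.

Definition ind_fin (o : option nat) : R := if o is Some _ then 1 else 0.

Definition Gret (h : history) (i : nat) (a : bool) : R :=
  match tau h i a with
  | Some s => limn (series (fun t => gamma ^+ t * reward (h i (s + t)%N)))
  | None => 0
  end.

Fixpoint Qhat (Q0 : bool -> R) (alpha : nat -> bool -> history -> R)
  (h : history) (k : nat) (a : bool) : R :=
  match k with
  | 0 => Q0 a
  | k'.+1 =>
      (1 - alpha k' a h * ind_fin (tau h k'.+1 a)) * Qhat Q0 alpha h k' a
      + alpha k' a h * ind_fin (tau h k'.+1 a) * Gret h k'.+1 a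
  end.

Definition in_argmax (q : bool -> R) (a : bool) : bool := q (~~ a) <= q a.
Definition card_argmax (q : bool -> R) : R := if q true == q false then 2 else 1.
Definition egreedy (eps : R) (q : bool -> R) (a : bool) : R :=
  eps / 2 + (if in_argmax q a then (1 - eps) / card_argmax q else 0).

(* V_pi(e) = E_{e,pi}[sum_t gamma^t R_{t+1}] = sum_t gamma^t E[R_{t+1}]; in
   this MDP X_t = e a.s., so E[R_{t+1}] = sum_a pi(e,a) * (mean of S(e,a,e,.)). *)
Definition Vpi (pi : bool -> R) : R :=
  limn (series (fun t => gamma ^+ t *
     (pi false * reward false + pi true * reward true))).

(* cylinder sets of the data space; their sigma-algebra is the sigma-algebra
   generated by all the episodes *)
Definition cyl : set (set history) :=
  [set C | exists i t b, C = [set h : history | h i t = b]].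

Definition hmeasurable (f : history -> R) : Prop :=
  forall B : set R, measurable B -> <<s cyl>> (f @^-1` B).

Definition agree_upto (k : nat) (h h' : history) : Prop :=
  forall i, (1 <= i <= k)%N -> h i = h' i.

(* nu_k (identified with nu_k({(e,1)})) is an F^k-measurable probability on Z *)
Definition nu_ok (nu : nat -> history -> R) : Prop :=
  forall k, hmeasurable (nu k) /\ (forall h, 0 <= nu k h <= 1) /\
    (forall h h', agree_upto k h h' -> nu k h = nu k h').

(* alpha_k(e,a) is [0,1]-valued and F^k \/ G^{k+1}_{tau^{k+1}_{e,a}}-measurable *)
Definition alpha_ok (alpha : nat -> bool -> history -> R) : Prop :=
  forall k a, hmeasurable (alpha k a) /\ (forall h, 0 <= alpha k a h <= 1) /\
    (forall h h', agree_upto k h h' ->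
       (forall t, (if tau h k.+1 a is Some s then (t <= s)%N else true) ->
          h k.+1 t = h' k.+1 t) ->
       alpha k a h = alpha k a h').

(* U i t : i.i.d. uniform[0,1] variables used to sample: episode k+1 has
   A_0 = 1 iff U k 0 < nu_k  and  A_t = 1 iff U k t < pi-hat^k(e,1), t >= 1. *)

Definition episode (Q0 : bool -> R) (nu : nat -> history -> R)
  (alpha : nat -> bool -> history -> R) {T : Type} (U : nat -> nat -> T -> R)
  (k : nat) (h : history) (w : T) : nat -> bool :=
  fun t => if t == 0%N then U k 0%N w < nu k h
           else U k t w < egreedy 0 (Qhat Q0 alpha h k) true.

(* data of the first k episodes (others set to false) *)
Fixpoint hist (Q0 : bool -> R) (nu : nat -> history -> R)
  (alpha : nat -> bool -> history -> R) {T : Type} (U : nat -> nat -> T -> R)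
  (w : T) (k : nat) : history :=
  match k with
  | 0 => fun _ _ => false
  | k'.+1 => fun i => if i == k'.+1 then episode Q0 nu alpha U k' (hist Q0 nu alpha U w k') w
                      else hist Q0 nu alpha U w k' i
  end.

Definition run (Q0 : bool -> R) (nu : nat -> history -> R)
  (alpha : nat -> bool -> history -> R) {T : Type} (U : nat -> nat -> T -> R)
  (w : T) : history := fun i => hist Q0 nu alpha U w i i.

End MC.

(* i.i.d. uniform[0,1] family (mutual independence = product rule over every
   finite subfamily) *)
Definition iid_uniform {R : realType} {d : measure_display} {T : measurableType d}
  (P : probability T R) (U : nat -> nat -> T -> R) : Prop :=
  (forall i t, measurable_fun setT (U i t)) /\
  (forall i t (x : R), 0 <= x <= 1 -> P [set w | U i t w <= x] = x%:E) /\
  (forall (s : seq (nat * nat)) (B : nat * nat -> set R), uniq s ->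
     (forall j, measurable (B j)) ->
     P (\big[setI/setT]_(j <- s) (U j.1 j.2 @^-1` B j)) =
     (\prod_(j <- s) P (U j.1 j.2 @^-1` B j))%E).

From mathcomp Require Import all_boot all_order all_algebra.
From mathcomp Require Import all_classical all_reals all_analysis.
From mathcomp Require Import ring lra.
Import Order.TTheory GRing.Theory Num.Theory.
Import numFieldNormedType.Exports.
Local Open Scope classical_set_scope.
Local Open Scope ring_scope.

(* Keep Q^k(e,1) = 1 and drive q_k := Q^k(e,0) deterministically.  Every episode
   starts with the non-greedy action (nu_k is a Dirac mass) and then follows the
   greedy one forever, so both actions are visited, and the return observed for
   action 0 is gamma/(1-gamma) > 1 (this is where gamma > 1/2 is used) while
   action 1 is greedy, and 0 while action 0 is greedy.  The rates for action 0
   are of order 1/k, with a divergent sum, so q_k is pushed across the level 1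
   infinitely often in both directions; a step that would land exactly on 1 is
   halved, which rules out ties.  Hence the greedy policy switches forever and
   V_{pi^k}(e) alternates between 0 and 1/(1-gamma).  Action 1 is updated with
   rate 1/(n+1) at its n-th visit, so both rate families satisfy the
   Robbins-Monro conditions.  Almost surely all the uniforms driving the sampling
   lie in [0,1), and then the algorithm produces exactly this trajectory. *)

Definition infinitely_often (p : pred nat) : Prop :=
  forall K, exists2 k, (K <= k)%N & p k.

Definition nvisits (p : pred nat) (k : nat) : nat := count p (iota 0 k).

Lemma nvisitsS p k : nvisits p k.+1 = (nvisits p k + p k)%N.
Proof. by rewrite /nvisits -addn1 iotaD count_cat /= addn0. Qed.

Lemma nvisits_homo p : {homo nvisits p : m n / (m <= n)%N}.
Proof. by move=> m n mn; rewrite /nvisits -(subnKC mn) iotaD count_cat leq_addr. Qed.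

Lemma nvisits_unbounded p :
  infinitely_often p -> forall M, exists N, (M <= nvisits p N)%N.
Proof.
move=> iop; elim=> [|M [N MN]]; first by exists 0%N.
have [k Nk pk] := iop N; exists k.+1.
by rewrite nvisitsS pk addn1 ltnS (leq_trans MN) ?nvisits_homo.
Qed.

Section real_sequences.
Variable R : realType.
Implicit Types (u : R ^nat) (p : pred nat).

Lemma harmonic_le1 n : harmonic n <= 1 :> R.
Proof. by rewrite /= invf_le1 ?ler1n ?ltr0n. Qed.

Lemma harmonic_leS n : harmonic n.+1 <= harmonic n :> R.
Proof. by rewrite /= lef_pV2 ?posrE ?ltr0n // ler_nat. Qed.

Lemma harmonic_le_double n : harmonic n <= 2 * harmonic n.+1 :> R.
Proof.
rewrite /= -[2]invrK -invfM lef_pV2 ?posrE ?mulr_gt0 ?invr_gt0 ?ltr0n //.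
have : 1 <= n.+1%:R :> R by rewrite ler1n.
by rewrite -[n.+2]addn1 natrD; lra.
Qed.

Lemma harmonicB n : harmonic n - harmonic n.+1 = harmonic n * harmonic n.+1 :> R.
Proof.
have n0 : 0 <= n%:R :> R := ler0n _ _.
by rewrite /= -[n.+2]addn1 natrD; field; apply/andP; split; rewrite gt_eqF //; lra.
Qed.

Lemma series_shift0 u N : u 0%N = 0 -> series (fun n => u n.+1) N = series u N.+1.
Proof. by move=> u0; rewrite !seriesEord /= big_ord_recl u0 add0r. Qed.

Lemma lim_series_geometric_head (g x y : R) u :
  0 <= g < 1 -> u 0%N = x -> (forall t, u t.+1 = y) ->
  limn (series (fun t => g ^+ t * u t)) = x + y * (g / (1 - g)).
Proof.
move=> /andP[g0 g1] u0 uS.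
have head n : series (fun t => g ^+ t * u t) n.+1 = x + series (geometric (g * y) g) n.
  rewrite !seriesEord /= big_ord_recl expr0 mul1r u0; congr (_ + _).
  by apply: eq_bigr => i _; rewrite uS exprS /=; ring.
apply: cvg_lim => //; rewrite -cvg_shiftS /=.
under eq_fun do rewrite head.
rewrite [_ * (g / _)]mulrCA mulrA; apply: cvgD; first exact: cvg_cst.
by apply: cvg_geometric_series; rewrite ger0_norm.
Qed.

Lemma cvgy_series_harmonic : series (@harmonic R) @ \oo --> +oo.
Proof.
apply: nondecreasing_dvgn_lt; last exact: dvg_harmonic.
by apply: nondecreasing_series => n _ _; exact: harmonic_ge0.
Qed.

Lemma cvgy_series_ge_harmonic (c : R) u :
  0 < c -> (forall n, c * harmonic n <= u n) -> series u @ \oo --> +oo.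
Proof.
move=> c0 cu; apply: (@ger_cvgy _ _ _ _ (fun n => c * series harmonic n)).
  apply: nearW => n; rewrite !seriesEord /= mulr_sumr.
  by apply: ler_sum => i _; exact: cu.
apply/cvgryPge => A; have /cvgryPge/(_ (A / c)) := cvgy_series_harmonic.
by apply: filterS => n; rewrite ler_pdivrMr // mulrC.
Qed.

Lemma is_cvg_series_harmonic_sqr : cvgn (series (fun n => harmonic n ^+ 2 : R)).
Proof.
have telescope n :
    series (fun k => 2 * (harmonic k - harmonic k.+1)) n = 2 * (1 - harmonic n) :> R.
  rewrite seriesEnat /= -mulr_sumr.
  under eq_bigr do rewrite -opprB.
  by rewrite sumrN telescope_sumr // opprB /= invr1.
apply: (@series_le_cvg _ _ (fun k => 2 * (harmonic k - harmonic k.+1))).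
- by move=> n; rewrite sqr_ge0.
- by move=> n; rewrite mulr_ge0 // subr_ge0 harmonic_leS.
- move=> n; rewrite harmonicB expr2 mulrCA ler_pM2l ?harmonic_gt0 //.
  exact: harmonic_le_double.
- rewrite (funext telescope); apply: is_cvgM; first exact: is_cvg_cst.
  by apply: is_cvgB; [exact: is_cvg_cst | exact: cvgP cvg_harmonic].
Qed.

Definition sampled p u : R ^nat := fun k => if p k then u (nvisits p k) else 0.

Lemma series_sampled p u M : series (sampled p u) M = series u (nvisits p M).
Proof.
elim: M => [|M IH]; first by rewrite !seriesEord /= !big_ord0.
rewrite seriesSr IH nvisitsS /sampled.
by case: (p M); rewrite ?addn1 ?seriesSr ?addr0 ?addn0.
Qed.

Lemma cvgy_series_sampled p u : infinitely_often p ->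
  series u @ \oo --> +oo -> series (sampled p u) @ \oo --> +oo.
Proof.
move=> iop /cvgryPge uy; apply/cvgryPge => A.
have [M _ MA] := uy A; have [N MN] := nvisits_unbounded _ iop M.
exists N => // n /= Nn; rewrite series_sampled; apply: MA.
exact: leq_trans MN (nvisits_homo p _ _ Nn).
Qed.

Lemma is_cvg_series_sampled p u : (forall n, 0 <= u n) ->
  cvgn (series u) -> cvgn (series (sampled p u)).
Proof.
move=> u0 cu; apply: nondecreasing_is_cvgn.
  by apply: nondecreasing_series => n _ _; rewrite /sampled; case: (p n).
exists (limn (series u)) => _ [n _ <-]; rewrite series_sampled.
by apply: nondecreasing_cvgn_le => //; exact: nondecreasing_series.
Qed.

Lemma not_cvgn_two_values u (a b : R) : a != b ->
  infinitely_often (fun k => u k == a) -> infinitely_often (fun k => u k == b) ->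
  ~ cvgn u.
Proof.
move=> ab ioa iob /cvg_ex[l /cvgrPdist_lt ul].
have e0 : 0 < `|a - b| / 2 by rewrite divr_gt0 // normr_gt0 subr_eq0.
have [N _ uN] := ul _ e0.
have [ka Nka /eqP uka] := ioa N; have [kb Nkb /eqP ukb] := iob N.
have := uN ka Nka; have := uN kb Nkb; rewrite /= uka ukb => lb la.
have := ler_distD l a b; rewrite [`|a - l|]distrC; lra.
Qed.

Lemma divergent_decrements_not_lbounded u c (m : R) K :
  series c @ \oo --> +oo ->
  ~ (forall k, (K <= k)%N -> m < u k /\ u k.+1 <= u k - c k).
Proof.
move=> /cvgryPge cy dec.
have drop n : u (n + K)%N <= u K - \sum_(K <= k < n + K) c k.
  elim: n => [|n IH]; first by rewrite add0n big_geq // subr0.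
  rewrite addSn big_nat_recr ?leq_addl //= opprD addrA.
  by have [_ ?] := dec _ (leq_addl n K); lra.
have [N _ cN] := cy (u K - m + series c K).
have := cN (N + K)%N (leq_addr _ _); rewrite series_addn.
have [+ _] := dec _ (leq_addl N K); have := drop N; lra.
Qed.

Lemma mulr_contract_le (a b m x : R) :
  0 <= a <= b -> 0 <= m <= x -> (1 - b) * x <= x - a * m.
Proof. by move=> /andP[a0 ab] /andP[m0 mx]; nra. Qed.

End real_sequences.

Arguments sampled {R} p u k.

Section algorithm1.
Variables (R : realType) (gamma : R).

Lemma tau_first (h : history) i a s :
  h i s = a -> (forall t, (t < s)%N -> h i t != a) -> tau h i a = Some s.
Proof.
move=> his before; rewrite /tau; case: pselect => [ex|]; last first.
  by case; exists s; apply/eqP.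
congr Some; case: ex_minnP => m /eqP him minm.
apply/eqP; rewrite eqn_leq minm ?his // leqNgt; apply/negP => ms.
by have := before m ms; rewrite him eqxx.
Qed.

Lemma Qhat_eq_upto (Q0 : bool -> R) (alpha : nat -> bool -> history -> R)
    (h h' : history) k :
  (forall k a h h', alpha k a h = alpha k a h') ->
  (forall i, (i <= k)%N -> h i = h' i) ->
  Qhat gamma Q0 alpha h k = Qhat gamma Q0 alpha h' k.
Proof.
move=> alpha_cst; elim: k => [//|k IH] hh'; apply: funext => a /=.
rewrite IH => [|i ik]; last by apply: hh'; exact: leqW.
by rewrite /Gret /tau (hh' k.+1 (leqnn _)) (alpha_cst k a h h').
Qed.

Lemma egreedy0_true (q : bool -> R) :
  q false != q true -> egreedy 0 q true = if q false < q true then 1 else 0.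
Proof.
move=> neq; rewrite /egreedy /in_argmax /card_argmax eq_sym (negbTE neq) /=.
rewrite le_eqVlt (negbTE neq) /=.
by case: (_ < _); rewrite mul0r add0r ?subr0 ?invr1 ?mulr1.
Qed.

End algorithm1.

Lemma hmeasurable_cst (R : realType) (c : R) : hmeasurable (fun=> c).
Proof.
move=> B _; have [cB|ncB] := pselect (B c).
  have -> : (fun _ : history => c) @^-1` B = setT by apply/seteqP; split.
  by have := sigma_algebraCD (@sigma_algebra0 _ setT cyl); rewrite setD0.
have -> : (fun _ : history => c) @^-1` B = set0 by apply/seteqP; split.
exact: sigma_algebra0.
Qed.

Lemma iid_uniform_ae_in01 (R : realType) (d : measure_display) (T : measurableType d)
    (P : probability T R) (U : nat -> nat -> T -> R) :
  iid_uniform P U -> {ae P, forall w, forall i t, 0 <= U i t w < 1}.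
Proof.
move=> [mU [cdfU _]]; apply: ae_foralln => i; apply: ae_foralln => t.
have mpre Y : measurable Y -> measurable (U i t @^-1` Y).
  by move=> mY; rewrite -[_ @^-1` _]setTI; exact: mU.
have mle x : measurable [set w | U i t w <= x].
  rewrite (_ : [set w | _] = U i t @^-1` `]-oo, x]); first exact: mpre.
  by apply/seteqP; split => w /=; rewrite in_itv.
pose ge1 := [set w | 1 <= U i t w].
have mge1 : measurable ge1.
  rewrite (_ : ge1 = U i t @^-1` `[1, +oo[); first exact: mpre.
  by apply/seteqP; split => w /=; rewrite in_itv /= andbT.
have P_ge1 : P ge1 = 0.
  apply/eqP; rewrite eq_le measure_ge0 andbT; apply/lee_addgt0Pr => e e0.
  rewrite add0e; have [e1|e1] := leP 1 e.
    by rewrite (le_trans (probability_le1 _ mge1)) // lee_fin.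
  have ge1_sub : ge1 `<=` ~` [set w | U i t w <= 1 - e].
    by move=> w; rewrite /ge1 /= => U1; apply/negP; rewrite -ltNge; lra.
  apply: (@le_trans _ _ (P (~` [set w | U i t w <= 1 - e]))).
    by apply: le_measure ge1_sub; rewrite ?inE //; exact: measurableC.
  rewrite probability_setC // cdfU; last lra.
  by rewrite -EFinB opprB addrC subrK.
exists ([set w | U i t w <= 0] `|` ge1); split.
- exact: measurableU.
- by apply: null_set_setU => //; apply: cdfU; rewrite lexx ler01.
- move=> w /= /negP; rewrite negb_and -ltNge -leNgt.
  by case/orP => [/ltW|]; [left|right].
Qed.

Section counterexample.
Context {R : realType} (gamma : R).
Hypothesis gamma_gt_half : 2^-1 < gamma < 1.

(* The return of the reward stream 0, 1, 1, ... *)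
Definition cgamma : R := gamma / (1 - gamma).

Definition target (q : R) : R := if q < 1 then cgamma else 0.

Definition step (k : nat) (q : R) : R :=
  if (1 - harmonic k) * q + harmonic k * target q == 1 then harmonic k / 2
  else harmonic k.

(* [qzero k] is Q^k(e,0) (see [Qhat_cex]). *)
Fixpoint qzero (k : nat) : R :=
  if k is k'.+1 then
    (1 - step k' (qzero k')) * qzero k' + step k' (qzero k') * target (qzero k')
  else 0.

Definition above (k : nat) : bool := 1 < qzero k.

Lemma cgamma_gt1 : 1 < cgamma.
Proof. by case/andP: gamma_gt_half => g1 g2; rewrite /cgamma ltr_pdivlMr; lra. Qed.

Lemma target_neq q : q != target q.
Proof.
have := cgamma_gt1; rewrite /target; case: (ltP q 1) => q1 c1; apply/eqP => qt; lra.
Qed.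

Lemma step_bounds k q : harmonic k / 2 <= step k q <= harmonic k.
Proof. have := @harmonic_gt0 R k; rewrite /step; case: ifP => _; lra. Qed.

Lemma qzero_neq1 k : qzero k != 1.
Proof.
elim: k => [|k IH] /=; first by rewrite eq_sym oner_eq0.
set q := qzero k; rewrite /step; set r := harmonic k.
case: ifPn => [/eqP full|//]; apply/eqP => half.
(* Both the full and the halved step landing on 1 would force [q = target q]. *)
have : r * (target q - q) = 0 by lra.
move/eqP; rewrite mulf_eq0 gt_eqF ?harmonic_gt0 //= subr_eq0 eq_sym.
by apply/negP; exact: target_neq.
Qed.

Lemma qzero_lt1 k : (qzero k < 1) = ~~ above k.
Proof. by rewrite /above -leNgt le_eqVlt (negbTE (qzero_neq1 k)). Qed.

Lemma above_io : infinitely_often above.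
Proof.
move=> K; apply: contrapT => noK.
have below k : (K <= k)%N -> qzero k < 1.
  by move=> Kk; rewrite qzero_lt1; apply/negP => ak; apply: noK; exists k.
have c1 := cgamma_gt1; pose m := cgamma - 1.
apply: (@divergent_decrements_not_lbounded R (fun k => cgamma - qzero k)
          (fun k => harmonic k / 2 * m) m K).
  by apply: (@cvgy_series_ge_harmonic _ (m / 2)) => [|n]; rewrite /m; lra.
move=> k Kk; have qk := below k Kk; split; first by rewrite /m; lra.
have /andP[b1 b2] := step_bounds k (qzero k); have := @harmonic_gt0 R k.
rewrite [qzero _.+1]/= /target qk => h0.
rewrite (_ : _ - _ = (1 - step k (qzero k)) * (cgamma - qzero k)); last by ring.
by apply: mulr_contract_le; apply/andP; rewrite /m; split; lra.
Qed.

Lemma below_io : infinitely_often (fun k => ~~ above k).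
Proof.
move=> K; apply: contrapT => noK.
have ab k : (K <= k)%N -> 1 < qzero k.
  by move=> Kk; apply: contrapT => /negP ak; apply: noK; exists k.
apply: (@divergent_decrements_not_lbounded R qzero (fun k => harmonic k / 2) 1 K).
  by apply: (@cvgy_series_ge_harmonic _ 2^-1) => [|n]; lra.
move=> k Kk; have qk := ab k Kk; split=> //.
have /andP[b1 b2] := step_bounds k (qzero k); have := @harmonic_gt0 R k.
have qk1 : (qzero k < 1) = false by rewrite qzero_lt1 /above qk.
rewrite [qzero _.+1]/= /target qk1 mulr0 addr0 -[_ / 2]mulr1 => h0.
by apply: mulr_contract_le; apply/andP; split; lra.
Qed.

Definition cex_Q0 : bool -> R := fun a => if a then 1 else 0.

Definition cex_nu : nat -> history -> R := fun k _ => if above k then 1 else 0.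

Definition cex_rate (k : nat) (a : bool) : R :=
  if a then sampled above harmonic k else step k (qzero k).

Definition cex_alpha : nat -> bool -> history -> R := fun k a _ => cex_rate k a.

(* The first action of every episode is the non-greedy one. *)
Definition cex_history : history :=
  fun i t => if i is k.+1 then (if t == 0%N then above k else ~~ above k) else false.

Lemma cex_rate_in01 k a : 0 <= cex_rate k a <= 1.
Proof.
rewrite /cex_rate /sampled; case: a.
  by case: (above k); rewrite ?lexx ?ler01 ?harmonic_ge0 ?harmonic_le1.
have := step_bounds k (qzero k); have := @harmonic_gt0 R k; have := harmonic_le1 R k.
lra.
Qed.

Lemma tau_cex k a : tau cex_history k.+1 a = Some (if a == above k then 0 else 1)%N.
Proof.
have [->|na] := eqVneq a (above k); rewrite ?eqxx ?(negbTE na).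
  exact: tau_first.
apply: tau_first => [|t]; rewrite /cex_history /=.
  by case: a (above k) na => [] [].
by rewrite ltnS leqn0 => /eqP->; rewrite eq_sym.
Qed.

Lemma gamma_ge0_lt1 : 0 <= gamma < 1.
Proof. by case/andP: gamma_gt_half => g1 g2; apply/andP; split; lra. Qed.

Lemma Gret_cex k a :
  Gret gamma cex_history k.+1 a = reward a + reward (~~ above k) * cgamma.
Proof.
rewrite /Gret tau_cex; apply: lim_series_geometric_head => [|/=|t].
- exact: gamma_ge0_lt1.
- case: (eqVneq a (above k)) => [->|na]; rewrite ?eqxx ?(negbTE na) /cex_history //=.
  by case: a (above k) na => [] [].
- by rewrite /cex_history /= addnS.
Qed.

Lemma target_qzero k : target (qzero k) = reward (~~ above k) * cgamma.
Proof. by rewrite /target qzero_lt1; case: (above k); rewrite /reward ?mul0r ?mul1r. Qed.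

Lemma Qhat_cex k :
  Qhat gamma cex_Q0 cex_alpha cex_history k = fun a => if a then 1 else qzero k.
Proof.
apply: funext => a; elim: k a => [|k IH] a; first by case: a.
rewrite /= IH tau_cex /ind_fin mulr1 Gret_cex /cex_alpha /cex_rate.
case: a; last by rewrite /reward add0r target_qzero.
rewrite /sampled; case: (above k) => /=; last by rewrite subr0 mul0r mulr1 addr0.
by rewrite mul0r addr0 !mulr1 subrK.
Qed.

Lemma egreedy_cex k :
  egreedy 0 (Qhat gamma cex_Q0 cex_alpha cex_history k) true = reward (~~ above k).
Proof. by rewrite Qhat_cex egreedy0_true ?qzero_neq1 // qzero_lt1. Qed.

Lemma Vpi_eq pi : Vpi gamma pi = pi true * (1 + cgamma).
Proof.
rewrite /Vpi (@lim_series_geometric_head _ _ (pi true) (pi true)) ?gamma_ge0_lt1 //.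
- by rewrite mulrDr mulr1.
- by rewrite /reward mulr0 add0r mulr1.
- by move=> t; rewrite /reward mulr0 add0r mulr1.
Qed.

Lemma hist_cex {T : Type} (U : nat -> nat -> T -> R) w :
  (forall i t, 0 <= U i t w < 1) ->
  forall k i, (i <= k)%N -> hist gamma cex_Q0 cex_nu cex_alpha U w k i = cex_history i.
Proof.
move=> U01; elim=> [|k IH] i ik; first by move: ik; rewrite leqn0 => /eqP->.
rewrite /=; case: eqVneq => [->|ik']; last first.
  by apply: IH; rewrite -ltnS ltn_neqAle ik' ik.
have Qhat_hist := @Qhat_eq_upto _ _ _ cex_alpha _ cex_history _ (fun _ _ _ _ => erefl) IH.
apply: funext => t; rewrite /episode Qhat_hist.
rewrite egreedy_cex /cex_nu /cex_history /reward; have /andP[U0 U1] := U01 k t.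
by case: t U0 U1 => [|t] U0 U1 /=; case: (above k); rewrite ?U1 // ltNge U0.
Qed.

Lemma run_cex {T : Type} (U : nat -> nat -> T -> R) w :
  (forall i t, 0 <= U i t w < 1) -> run gamma cex_Q0 cex_nu cex_alpha U w = cex_history.
Proof. by move=> U01; apply: funext => i; exact: hist_cex. Qed.

Lemma ind_fin_tau_cex k a : ind_fin R (tau cex_history k.+1 a) = 1.
Proof. by rewrite tau_cex. Qed.

Lemma series_sampled_above_shift (u : R ^nat) N :
  series (fun n => sampled above u n.+1) N = series (sampled above u) N.+1.
Proof. by rewrite series_shift0 // /sampled /above /= ltr10. Qed.

Lemma cvgy_series_cex_rate a : series (fun n => cex_rate n.+1 a) @ \oo --> +oo.
Proof.
case: a; rewrite /cex_rate.
  rewrite (funext (series_sampled_above_shift _)).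
  rewrite (cvg_shiftS (series (sampled above harmonic))).
  exact: cvgy_series_sampled above_io (@cvgy_series_harmonic R).
apply: (@cvgy_series_ge_harmonic _ 4^-1) => // n.
have := step_bounds n.+1 (qzero n.+1); have := harmonic_le_double R n; lra.
Qed.

Lemma is_cvg_series_cex_rate_sqr a : cvgn (series (fun n => cex_rate n.+1 a ^+ 2)).
Proof.
case: a; rewrite /cex_rate.
  have sq n : sampled above (@harmonic R) n.+1 ^+ 2 =
              sampled above (fun j => harmonic j ^+ 2) n.+1.
    by rewrite /sampled; case: (above _); rewrite ?expr0n.
  rewrite (funext sq) (funext (series_sampled_above_shift _)).
  have /cvg_ex[l vl] := is_cvg_series_sampled _ above _ (fun n => sqr_ge0 _)
                          (@is_cvg_series_harmonic_sqr R).
  by apply/cvg_ex; exists l; rewrite cvg_shiftS.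
apply: (@series_le_cvg R _ (fun n => harmonic n ^+ 2)) => [n|n|n|]; rewrite ?sqr_ge0 //.
  have /andP[b1 b2] := step_bounds n.+1 (qzero n.+1).
  have := harmonic_leS R n; have := @harmonic_gt0 R n.+1.
  by rewrite !expr2 => h0 hS; apply: ler_pM; lra.
exact: is_cvg_series_harmonic_sqr.
Qed.

Lemma not_cvgn_Vpi_cex :
  ~ cvgn (fun k => Vpi gamma (egreedy 0 (Qhat gamma cex_Q0 cex_alpha cex_history k))).
Proof.
under eq_fun do rewrite Vpi_eq egreedy_cex.
apply: (@not_cvgn_two_values _ _ 0 (1 + cgamma)).
- by rewrite eq_sym lt0r_neq0 //; have := cgamma_gt1; lra.
- by move=> K; have [k Kk ak] := above_io K; exists k; rewrite // ak /reward mul0r.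
- move=> K; have [k Kk /negbTE ak] := below_io K.
  by exists k; rewrite // ak /reward mul1r.
Qed.

End counterexample.

Theorem proposition2p4 (R : realType) (gamma : R) :
  2^-1 < gamma < 1 ->
  exists (Q0 : bool -> R) (nu : nat -> history -> R)
         (alpha : nat -> bool -> history -> R),
    nu_ok nu /\ alpha_ok alpha /\
    forall (d : measure_display) (T : measurableType d) (P : probability T R)
           (U : nat -> nat -> T -> R),
      iid_uniform P U ->
      {ae P, forall w,
        let h := run gamma Q0 nu alpha U w in
        (forall a : bool,
           series (fun n => alpha n.+1 a h * ind_fin R (tau h n.+2 a)) @ \oo --> +oo) /\
        (forall a : bool,
           cvg (series (fun n => (alpha n.+1 a h) ^+ 2 * ind_fin R (tau h n.+2 a)) @ \oo)) /\
        ~ cvg ((fun k => Vpi gamma (egreedy 0 (Qhat gamma Q0 alpha h k))) @ \oo)}.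
Proof.
move=> hg; exists cex_Q0, (cex_nu gamma), (cex_alpha gamma); split; [|split].
- move=> k; split; first exact: hmeasurable_cst.
  by split=> // h; rewrite /cex_nu; case: (above gamma k); rewrite ?lexx ?ler01.
- move=> k a; split; first exact: hmeasurable_cst.
  by split=> // h; exact: cex_rate_in01.
move=> d T P U /iid_uniform_ae_in01; apply: filterS => w U01.
rewrite run_cex //=; split; [|split] => [a|a|].
- under eq_fun do rewrite ind_fin_tau_cex mulr1.
  exact: cvgy_series_cex_rate.
- under eq_fun do rewrite ind_fin_tau_cex mulr1.
  exact: is_cvg_series_cex_rate_sqr.
- exact: not_cvgn_Vpi_cex.
Qed.
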